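(* Let $G$ be a group and $L,N$ normal subgroups with $L\geqslant N$; let $i\colon N\hookrightarrow L$ be the inclusion. Assume $\mathrm{H}^1(L/N)=\mathrm{Q}(L/N)$ and $\mathrm{H}^2_b(L/N)^G=0$. Then $\mathrm{H}^1(N)^G\cap i^*\mathrm{Q}(L)^G=i^*\mathrm{H}^1(L)^G$. In particular, this equality holds whenever $L/N$ is boundedly $2$-acyclic.
   Context: $\mathrm{Q}(H)$: homogeneous quasimorphisms on a group $H$; $\mathrm{H}^1(H)$: homomorphisms $H\to\mathbb{R}$. $\mathrm{Q}(L)^G$, $\mathrm{H}^1(L)^G$, $\mathrm{H}^1(N)^G$: the elements invariant under conjugation by $G$. $i^*$ denotes restriction to $N$. $\mathrm{H}^2_b$ is second bounded cohomology with trivial real coefficients; $G$ acts on $L/N$ by conjugation, hence on $\mathrm{H}^2_b(L/N)$, and $\mathrm{H}^2_b(L/N)^G$ is the invariant part. A group $\Lambda$ is boundedly $n$-acyclic if $\mathrm{H}^k_b(\Lambda)=0$ for $1\le k\le n$. *)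

From Stdlib Require Import Reals.
Open Scope R_scope.

Record group := Group {
  gcar :> Type;
  gmul : gcar -> gcar -> gcar;
  ginv : gcar -> gcar;
  gone : gcar;
  gmulA : forall x y z, gmul x (gmul y z) = gmul (gmul x y) z;
  gmul1l : forall x, gmul gone x = x;
  gmulVl : forall x, gmul (ginv x) x = gone }.

Arguments gmul {g} _ _.
Arguments ginv {g} _.
Arguments gone {g}.

Fixpoint gpow {G : group} (x : G) (n : nat) : G :=
  match n with O => gone | S k => gmul x (gpow x k) end.

Definition conj {G : group} (g x : G) : G := gmul (gmul g x) (ginv g).

Definition is_subgroup {G : group} (S : G -> Prop) : Prop :=
  S gone /\ (forall x y, S x -> S y -> S (gmul x y)) /\ (forall x, S x -> S (ginv x)).

Definition is_normal {G : group} (S : G -> Prop) : Prop :=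
  is_subgroup S /\ forall g x, S x -> S (conj g x).

(** Real-valued functions on a subgroup S of G are represented by functions
    G -> R of which only the values on S matter. *)

Definition is_hom {G : group} (S : G -> Prop) (f : G -> R) : Prop :=
  forall x y, S x -> S y -> f (gmul x y) = f x + f y.

Definition is_qm {G : group} (S : G -> Prop) (f : G -> R) : Prop :=
  exists D : R, forall x y, S x -> S y -> Rabs (f (gmul x y) - f x - f y) <= D.

(** homogeneous quasimorphisms (elements of Q(S)): f(x^n) = n f(x) for all
    integers n, written as the nat case plus f(x^{-1}) = - f(x). *)
Definition is_hqm {G : group} (S : G -> Prop) (f : G -> R) : Prop :=
  is_qm S f /\
  (forall x, S x -> (forall n : nat, f (gpow x n) = INR n * f x) /\ f (ginv x) = - f x).

Definition G_invariant {G : group} (S : G -> Prop) (f : G -> R) : Prop :=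
  forall g x, S x -> f (conj g x) = f x.

Definition fullset {G : group} : G -> Prop := fun _ => True.

(** [pi : G -> Q] exhibits Q as the quotient L/N: it is multiplicative on L,
    maps L onto Q, and its kernel on L is exactly N. *)
Definition is_quotient_map {G Q : group} (L N : G -> Prop) (pi : G -> Q) : Prop :=
  (forall x y, L x -> L y -> pi (gmul x y) = gmul (pi x) (pi y)) /\
  (forall q : Q, exists l, L l /\ pi l = q) /\
  (forall l, L l -> (pi l = gone <-> N l)).

(** Bounded cohomology of a group Q with trivial real coefficients, via the
    inhomogeneous bar resolution. *)
Definition bounded1 {Q : group} (b : Q -> R) : Prop :=
  exists C, forall x, Rabs (b x) <= C.
Definition bounded2 {Q : group} (c : Q -> Q -> R) : Prop :=
  exists C, forall x y, Rabs (c x y) <= C.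
Definition delta1 {Q : group} (b : Q -> R) : Q -> Q -> R :=
  fun x y => b y - b (gmul x y) + b x.
Definition cocycle2 {Q : group} (c : Q -> Q -> R) : Prop :=
  forall x y z, c y z - c (gmul x y) z + c x (gmul y z) - c x y = 0.

Definition Hb1_vanishes (Q : group) : Prop :=
  forall b : Q -> R, bounded1 b -> (forall x y, delta1 b x y = 0) -> forall x, b x = 0.

Definition Hb2_vanishes (Q : group) : Prop :=
  forall c : Q -> Q -> R, bounded2 c -> cocycle2 c ->
    exists b, bounded1 b /\ forall x y, c x y = delta1 b x y.

Definition boundedly_2_acyclic (Q : group) : Prop :=
  Hb1_vanishes Q /\ Hb2_vanishes Q.

(** H^2_b(L/N)^G = 0, where G acts on Q = L/N (via pi) by conjugation:
    every bounded 2-cocycle whose class is G-invariant is a bounded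
    coboundary.  The class of c is g-invariant iff the conjugated cocycle
    (pi l1, pi l2) |-> c (pi (g l1 g^-1)) (pi (g l2 g^-1)) differs from c
    by a bounded coboundary (pi maps L onto Q, so this covers all of Q^2). *)
Definition Hb2_invariant_vanishes {G Q : group} (L : G -> Prop) (pi : G -> Q) : Prop :=
  forall c : Q -> Q -> R, bounded2 c -> cocycle2 c ->
    (forall g : G, exists b : Q -> R, bounded1 b /\
       forall l1 l2, L l1 -> L l2 ->
         c (pi (conj g l1)) (pi (conj g l2)) - c (pi l1) (pi l2)
         = delta1 b (pi l1) (pi l2)) ->
    exists b, bounded1 b /\ forall x y, c x y = delta1 b x y.

(** The conclusion: H^1(N)^G ∩ i^* Q(L)^G = i^* H^1(L)^G, as an equality of
    sets of functions on N (functions agreeing on N are identified). *)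
Definition restriction_equality {G : group} (L N : G -> Prop) : Prop :=
  forall psi : G -> R,
    (is_hom N psi /\ G_invariant N psi /\
      exists phi, is_hqm L phi /\ G_invariant L phi /\ forall n, N n -> phi n = psi n)
    <->
    (exists phi, is_hom L phi /\ G_invariant L phi /\ forall n, N n -> phi n = psi n).

(* Let phi be a G-invariant homogeneous quasimorphism on L whose restriction
   to N is a homomorphism.  Writing (l n)^k = l^k m with m in N a product of
   conjugates of n, homogeneity and the bounded defect give
   phi (l n) = phi l + phi n.  Hence the defect of phi only depends on the
   images in L/N and descends to a bounded 2-cocycle on L/N, which is
   G-invariant on the nose because phi is.  It is therefore the coboundary of
   a bounded b, so phi + b o pi is a homomorphism on L.  Then b o pi is both
   bounded and homogeneous, hence zero, and phi itself is a homomorphism. *)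

From Stdlib Require Import Reals Lra ClassicalEpsilon.
Open Scope R_scope.

Arguments gmulA {g} x y z.
Arguments gmul1l {g} x.
Arguments gmulVl {g} x.

Lemma INR_mult_bounded_eq0 (a D : R) : (forall k : nat, Rabs (INR k * a) <= D) -> a = 0.
Proof.
  intros Hbound. destruct (Req_dec a 0) as [Ha0 | Ha0]; [exact Ha0 | exfalso].
  assert (Ha : 0 < Rabs a) by (apply Rabs_pos_lt; exact Ha0).
  destruct (INR_unbounded (D / Rabs a)) as [k Hk].
  specialize (Hbound k).
  rewrite Rabs_mult, (Rabs_pos_eq (INR k)) in Hbound by apply pos_INR.
  apply Rmult_gt_compat_r with (r := Rabs a) in Hk; [| exact Ha].
  unfold Rdiv in Hk. rewrite Rmult_assoc, Rinv_l in Hk by lra. lra.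
Qed.

Section GroupLaws.
Context {G : group}.
Implicit Types x y z : G.

Lemma gmulKV x z : gmul (ginv x) (gmul x z) = z.
Proof. rewrite gmulA, gmulVl, gmul1l. reflexivity. Qed.

Lemma gmulV x : gmul x (ginv x) = gone.
Proof.
  transitivity (gmul (gmul (ginv (ginv x)) (ginv x)) (gmul x (ginv x))).
  - rewrite gmulVl, gmul1l. reflexivity.
  - rewrite <- gmulA, (gmulA (ginv x) x (ginv x)), gmulVl, gmul1l. apply gmulVl.
Qed.

Lemma gmul1r x : gmul x gone = x.
Proof. rewrite <- (gmulVl x), gmulA, gmulV, gmul1l. reflexivity. Qed.

Lemma gmulVK x z : gmul x (gmul (ginv x) z) = z.
Proof. rewrite gmulA, gmulV, gmul1l. reflexivity. Qed.

Lemma ginv_unique x y : gmul y x = gone -> y = ginv x.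
Proof. intros Hyx. rewrite <- (gmul1r y), <- (gmulV x), gmulA, Hyx, gmul1l. reflexivity. Qed.

Lemma ginvK x : ginv (ginv x) = x.
Proof. symmetry. apply ginv_unique, gmulV. Qed.

Lemma gone_unique x : gmul x x = x -> x = gone.
Proof. intros Hxx. rewrite <- (gmulKV x x), Hxx. apply gmulVl. Qed.

Lemma conj_mul (g x y : G) : conj g (gmul x y) = gmul (conj g x) (conj g y).
Proof. unfold conj. rewrite <- !gmulA, gmulKV. reflexivity. Qed.

End GroupLaws.

Ltac gsimpl :=
  repeat rewrite <- gmulA; repeat rewrite ?ginvK, ?gmulKV, ?gmulVK, ?gmul1l, ?gmul1r.

Section Subgroup.
Context {G : group} (S : G -> Prop) (hS : is_subgroup S).

Lemma subgroup1 : S gone.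
Proof. apply hS. Qed.

Lemma subgroupM x y : S x -> S y -> S (gmul x y).
Proof. apply hS. Qed.

Lemma subgroupV x : S x -> S (ginv x).
Proof. apply hS. Qed.

Lemma subgroup_gpow x k : S x -> S (gpow x k).
Proof.
  intros Hx. induction k as [| k IHk]; simpl.
  - apply subgroup1.
  - apply subgroupM; assumption.
Qed.

Lemma hom_gone f : is_hom S f -> f gone = 0.
Proof.
  intros Hf. pose proof (Hf gone gone subgroup1 subgroup1) as E.
  rewrite gmul1l in E. lra.
Qed.

Lemma hom_gpow f : is_hom S f -> forall x k, S x -> f (gpow x k) = INR k * f x.
Proof.
  intros Hf x k Hx. induction k as [| k IHk]; simpl gpow.
  - rewrite (hom_gone f Hf). simpl. ring.
  - rewrite Hf, IHk, S_INR by (auto using subgroup_gpow). ring.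
Qed.

Lemma hom_ginv f : is_hom S f -> forall x, S x -> f (ginv x) = - f x.
Proof.
  intros Hf x Hx. pose proof (Hf (ginv x) x (subgroupV x Hx) Hx) as E.
  rewrite gmulVl, (hom_gone f Hf) in E. lra.
Qed.

Lemma hom_is_hqm f : is_hom S f -> is_hqm S f.
Proof.
  intros Hf. split.
  - exists 0. intros x y Hx Hy. rewrite Hf by assumption.
    replace (f x + f y - f x - f y) with 0 by ring. rewrite Rabs_R0. lra.
  - intros x Hx. split.
    + intros k. apply hom_gpow; assumption.
    + apply hom_ginv; assumption.
Qed.

End Subgroup.

Lemma normal_subgroup {G : group} (S : G -> Prop) : is_normal S -> is_subgroup S.
Proof. intros hS. apply hS. Qed.

Lemma normalJ {G : group} (S : G -> Prop) : is_normal S -> forall g x, S x -> S (conj g x).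
Proof. intros hS. apply hS. Qed.

Lemma G_invariant_restrict {G : group} (S T : G -> Prop) f :
  (forall x, T x -> S x) -> G_invariant S f -> G_invariant T f.
Proof. intros hTS Hf g x Hx. apply Hf; auto. Qed.

Lemma gpow_mul_normal {G : group} (N : G -> Prop) (f : G -> R) :
  is_normal N -> is_hom N f -> G_invariant N f ->
  forall l n k, N n ->
  exists m, N m /\ f m = INR k * f n /\ gpow (gmul l n) k = gmul (gpow l k) m.
Proof.
  intros hN Hf HfG l n k Hn. pose proof (normal_subgroup N hN) as hNs.
  induction k as [| k [m [Hm [Hfm Hpow]]]].
  - exists gone. repeat split.
    + apply subgroup1, hNs.
    + rewrite (hom_gone N hNs f Hf). simpl. ring.
    + simpl. rewrite gmul1r. reflexivity.
  - set (n' := conj (ginv (gpow l k)) n).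
    assert (Hn' : N n') by (apply (normalJ N hN), Hn).
    exists (gmul n' m). repeat split.
    + apply subgroupM; assumption.
    + rewrite Hf, Hfm, S_INR by assumption. unfold n'. rewrite HfG by assumption. ring.
    + cbn [gpow]. rewrite Hpow. unfold n', conj. gsimpl. reflexivity.
Qed.

Definition defect {G : group} (f : G -> R) (x y : G) : R :=
  f (gmul x y) - f x - f y.

Lemma defect_cocycle {G : group} (f : G -> R) (x y z : G) :
  defect f y z - defect f (gmul x y) z + defect f x (gmul y z) - defect f x y = 0.
Proof. unfold defect. rewrite gmulA. ring. Qed.

Section QuotientMap.
Context {G Q : group} (L N : G -> Prop) (pi : G -> Q).
Hypothesis hLs : is_subgroup L.
Hypothesis hpi : is_quotient_map L N pi.

Let L1 : L gone := subgroup1 L hLs.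
Let LM : forall x y, L x -> L y -> L (gmul x y) := subgroupM L hLs.
Let LV : forall x, L x -> L (ginv x) := subgroupV L hLs.

Lemma quotient_mapM l1 l2 : L l1 -> L l2 -> pi (gmul l1 l2) = gmul (pi l1) (pi l2).
Proof. apply hpi. Qed.

Lemma quotient_mapV l : L l -> pi (ginv l) = ginv (pi l).
Proof.
  intros Hl. apply ginv_unique.
  rewrite <- quotient_mapM by auto. rewrite gmulVl.
  apply gone_unique. rewrite <- quotient_mapM by auto.
  rewrite gmul1l. reflexivity.
Qed.

Lemma quotient_map_fiber l l' : L l -> L l' -> pi l = pi l' -> N (gmul (ginv l) l').
Proof.
  intros Hl Hl' E. apply hpi; [auto |].
  rewrite quotient_mapM, quotient_mapV, E by auto. apply gmulVl.
Qed.

Lemma quotient_lift2 (d : G -> G -> R) :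
  (forall l1 l1' l2 l2', L l1 -> L l1' -> L l2 -> L l2' ->
     pi l1 = pi l1' -> pi l2 = pi l2' -> d l1 l2 = d l1' l2') ->
  exists c : Q -> Q -> R, forall l1 l2, L l1 -> L l2 -> c (pi l1) (pi l2) = d l1 l2.
Proof.
  intros Hd.
  assert (Hsec : forall q, {l | L l /\ pi l = q}).
  { intros q. apply constructive_indefinite_description. apply hpi. }
  exists (fun q1 q2 => d (proj1_sig (Hsec q1)) (proj1_sig (Hsec q2))).
  intros l1 l2 Hl1 Hl2.
  destruct (Hsec (pi l1)) as [s1 [Hs1 E1]], (Hsec (pi l2)) as [s2 [Hs2 E2]].
  apply Hd; assumption.
Qed.

End QuotientMap.

Section NormalPair.
Context {G Q : group} (L N : G -> Prop) (pi : G -> Q).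
Hypothesis hL : is_normal L.
Hypothesis hN : is_normal N.
Hypothesis hNL : forall x, N x -> L x.
Hypothesis hpi : is_quotient_map L N pi.

Let hLs : is_subgroup L := normal_subgroup L hL.
Let hNs : is_subgroup N := normal_subgroup N hN.
Let LM : forall x y, L x -> L y -> L (gmul x y) := subgroupM L hLs.
Let NM : forall x y, N x -> N y -> N (gmul x y) := subgroupM N hNs.
Let LJ : forall g x, L x -> L (conj g x) := normalJ L hL.
Let NJ : forall g x, N x -> N (conj g x) := normalJ N hN.
Let Lpow : forall x k, L x -> L (gpow x k) := subgroup_gpow L hLs.
Let pi_mul : forall l1 l2, L l1 -> L l2 -> pi (gmul l1 l2) = gmul (pi l1) (pi l2) :=
  quotient_mapM L N pi hpi.
Let pi_surj : forall q, exists l, L l /\ pi l = q := proj1 (proj2 hpi).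

Section InvariantQuasimorphism.
Variable phi : G -> R.
Hypothesis hphi : is_hqm L phi.
Hypothesis hphiG : G_invariant L phi.
Hypothesis hphiN : is_hom N phi.

Lemma hqm_mul_kernel l n : L l -> N n -> phi (gmul l n) = phi l + phi n.
Proof.
  intros Hl Hn. destruct hphi as [[D HD] Hhom].
  enough (E : phi (gmul l n) - phi l - phi n = 0) by lra.
  apply (INR_mult_bounded_eq0 _ D). intros k.
  destruct (gpow_mul_normal N phi hN hphiN (G_invariant_restrict L N phi hNL hphiG) l n k Hn)
    as [m [Hm [Hphim Hpow]]].
  replace (INR k * (phi (gmul l n) - phi l - phi n))
    with (phi (gmul (gpow l k) m) - phi (gpow l k) - phi m).
  - apply HD; auto.
  - rewrite <- Hpow, (proj1 (Hhom _ (LM _ _ Hl (hNL _ Hn))) k), (proj1 (Hhom _ Hl) k), Hphim.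
    ring.
Qed.

Lemma defect_fiber l1 l1' l2 l2' : L l1 -> L l1' -> L l2 -> L l2' ->
  pi l1 = pi l1' -> pi l2 = pi l2' -> defect phi l1 l2 = defect phi l1' l2'.
Proof.
  intros Hl1 Hl1' Hl2 Hl2' E1 E2.
  pose proof (quotient_map_fiber L N pi hLs hpi l1 l1' Hl1 Hl1' E1) as Hn1.
  pose proof (quotient_map_fiber L N pi hLs hpi l2 l2' Hl2 Hl2' E2) as Hn2.
  set (n1 := gmul (ginv l1) l1') in *. set (n2 := gmul (ginv l2) l2') in *.
  replace l1' with (gmul l1 n1) by (unfold n1; gsimpl; reflexivity).
  replace l2' with (gmul l2 n2) by (unfold n2; gsimpl; reflexivity).
  (* move n1 past l2 n2 so that both kernel elements end up on the right *)
  assert (Eprod : gmul (gmul l1 n1) (gmul l2 n2)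
                  = gmul (gmul l1 l2) (gmul (conj (ginv l2) n1) n2))
    by (unfold conj; gsimpl; reflexivity).
  unfold defect.
  rewrite Eprod, (hqm_mul_kernel _ (gmul (conj (ginv l2) n1) n2)), (hqm_mul_kernel l1 n1),
    (hqm_mul_kernel l2 n2), (hphiN (conj (ginv l2) n1) n2), (hphiG _ n1) by auto.
  ring.
Qed.

Lemma hom_of_bounded_primitive (b : Q -> R) : bounded1 b ->
  (forall l1 l2, L l1 -> L l2 -> defect phi l1 l2 = delta1 b (pi l1) (pi l2)) ->
  is_hom L phi.
Proof.
  intros [C HC] Hb.
  set (h := fun l => phi l + b (pi l)).
  assert (Hh : is_hom L h).
  { intros l1 l2 Hl1 Hl2. pose proof (Hb l1 l2 Hl1 Hl2) as E.
    unfold h, defect, delta1 in *. rewrite pi_mul by assumption. lra. }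
  assert (Hb0 : forall l, L l -> b (pi l) = 0).
  { intros l Hl. apply (INR_mult_bounded_eq0 _ C). intros k.
    replace (INR k * b (pi l)) with (b (pi (gpow l k))).
    - apply HC.
    - pose proof (hom_gpow L hLs h Hh l k Hl) as E. unfold h in E.
      rewrite (proj1 (proj2 hphi l Hl) k) in E. lra. }
  intros l1 l2 Hl1 Hl2. pose proof (Hb l1 l2 Hl1 Hl2) as E.
  unfold defect, delta1 in E. rewrite <- pi_mul, !Hb0 in E by auto.
  lra.
Qed.

Lemma hqm_invariant_hom : Hb2_invariant_vanishes L pi -> is_hom L phi.
Proof.
  intros HB.
  destruct (quotient_lift2 L N pi hpi (defect phi) defect_fiber) as [c Hc].
  destruct hphi as [[D HD] _].
  destruct (HB c) as [b [Hbb Hcb]].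
  - exists D. intros x y.
    destruct (pi_surj x) as [l1 [Hl1 <-]], (pi_surj y) as [l2 [Hl2 <-]].
    rewrite Hc by assumption. apply HD; assumption.
  - intros x y z.
    destruct (pi_surj x) as [l1 [Hl1 <-]], (pi_surj y) as [l2 [Hl2 <-]],
      (pi_surj z) as [l3 [Hl3 <-]].
    rewrite <- !pi_mul, !Hc by auto.
    apply defect_cocycle.
  - intros g. exists (fun _ => 0). split.
    + exists 0. intros _. rewrite Rabs_R0. lra.
    + intros l1 l2 Hl1 Hl2.
      rewrite !Hc by auto. unfold defect, delta1.
      rewrite <- conj_mul, !hphiG by auto. ring.
  - apply (hom_of_bounded_primitive b Hbb). intros l1 l2 Hl1 Hl2.
    rewrite <- Hc by assumption. apply Hcb.
Qed.

End InvariantQuasimorphism.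

Lemma restriction_equality_of_Hb2_invariant_vanishes :
  Hb2_invariant_vanishes L pi -> restriction_equality L N.
Proof.
  intros HB psi. split.
  - intros [hpsi [_ [phi [hphi [hphiG hphipsi]]]]].
    assert (hphiN : is_hom N phi).
    { intros x y Hx Hy. rewrite !hphipsi by auto. apply hpsi; assumption. }
    exists phi. repeat split; try assumption.
    exact (hqm_invariant_hom phi hphi hphiG hphiN HB).
  - intros [phi [hphi [hphiG hphipsi]]]. repeat split.
    + intros x y Hx Hy. rewrite <- !hphipsi by auto. apply hphi; auto.
    + intros g x Hx. rewrite <- !hphipsi by auto. auto.
    + exists phi. split; [| split]; try assumption.
      apply hom_is_hqm; assumption.
Qed.

End NormalPair.

Lemma Hb2_invariant_vanishes_of_Hb2_vanishes {G Q : group} (L : G -> Prop) (pi : G -> Q) :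
  Hb2_vanishes Q -> Hb2_invariant_vanishes L pi.
Proof. intros HB c Hc Hcoc _. exact (HB c Hc Hcoc). Qed.

Theorem proposition5p8 (G Q : group) (L N : G -> Prop) (pi : G -> Q)
  (hL : is_normal L) (hN : is_normal N) (hNL : forall x, N x -> L x)
  (hpi : is_quotient_map L N pi) :
  ((forall f : Q -> R, is_hom fullset f <-> is_hqm fullset f) ->
   Hb2_invariant_vanishes L pi ->
   restriction_equality L N)
  /\
  (boundedly_2_acyclic Q -> restriction_equality L N).
Proof.
  split.
  - intros _. apply (restriction_equality_of_Hb2_invariant_vanishes L N pi); assumption.
  - intros [_ HB]. apply (restriction_equality_of_Hb2_invariant_vanishes L N pi); try assumption.
    apply Hb2_invariant_vanishes_of_Hb2_vanishes, HB.
Qed.
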